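(* Let $n\ge 3$ and let $A=(a_{ij})\in\mathbb{R}^{n\times n}$ be symmetric (indefinite), and suppose $PAP^T=LTL^T$ where $P$ is a permutation matrix, $L=(l_{ij})$ is unit lower triangular with first column $e_1$ and $|l_{ij}|\le 1$ for all $i,j$, and $T=(t_{ij})$ is symmetric tridiagonal (as produced by Aasen's algorithm). Then the growth factor satisfies $$\rho:=\frac{\max_{i,j}|t_{ij}|}{\max_{i,j}|a_{ij}|}\le 2^{n-1}.$$ Moreover, if $n\ge 6$, then this bound is not attained: $|t_{nn}|<2^{n-1}\max_{i,j}|a_{ij}|$, and hence $\rho<2^{n-1}$.
   Context: $e_1$ denotes the first column of the $n\times n$ identity matrix. The growth factor of the factorization is the ratio of the largest absolute entry of $T$ to the largest absolute entry of $A$. It is assumed $A\neq 0$. *)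

From HB Require Import structures.
From mathcomp Require Import all_boot all_order all_algebra all_fingroup.
Set Implicit Arguments. Unset Strict Implicit. Unset Printing Implicit Defensive.
Import Order.TTheory GRing.Theory Num.Theory.
Local Open Scope ring_scope.

(* max_{i,j} |m_ij| (entries' absolute values are >= 0, so 0 is a neutral start) *)
Definition maxabs (R : realFieldType) (n : nat) (M : 'M[R]_n) : R :=
  \big[Num.max/0]_(i < n) \big[Num.max/0]_(j < n) `|M i j|.

Definition unit_lower (R : realFieldType) (n : nat) (L : 'M[R]_n) : Prop :=
  (forall i : 'I_n, L i i = 1) /\ (forall i j : 'I_n, (i < j)%N -> L i j = 0).

Definition first_col_e1 (R : realFieldType) (n : nat) (L : 'M[R]_n) : Prop :=
  forall (i j : 'I_n), val j = 0%N -> L i j = (if val i == 0%N then 1 else 0).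

Definition sym_tridiag (R : realFieldType) (n : nat) (T : 'M[R]_n) : Prop :=
  T^T = T /\ (forall i j : 'I_n, (i.+1 < j)%N -> T i j = 0).

Definition growth (R : realFieldType) (n : nat) (A T : 'M[R]_n) : R :=
  maxabs T / maxabs A.

From HB Require Import structures.
From mathcomp Require Import all_boot all_order all_algebra all_fingroup.
From mathcomp Require Import ring lra zify.
Set Implicit Arguments. Unset Strict Implicit. Unset Printing Implicit Defensive.
Import Order.TTheory GRing.Theory Num.Theory.
Local Open Scope ring_scope.

(* Write P A P^T = L H with H = T L^T, which is upper Hessenberg, and index
   from 0 to N = n - 1. As the first column of L is e_1, forward substitution
   gives h_kj = b_kj - sum_(0 < m < k) l_km h_mj for b = P A P^T, so |l_km| <= 1
   yields |h_kj| <= 2^(k-1) max|a_ij| for k > 0. Since t_(i,i-1) = h_(i,i-1) and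
   t_ii = h_ii - h_(i,i-1) l_(i,i-1), we get |t_ij| <= 2^min(i,j) max|a_ij|, and
   t_NN could only reach 2^N max|a_ij| if |h_NN| = 2^(N-1) max|a_ij|. That
   equality propagates through every triangle inequality of the last column:
   with s_k the sign of h_kN it forces l_km = - s_k s_m and b_kN = s_k max|a_ij|.
   Column N - 2 of P A P^T is then overdetermined: for N >= 5 its signed partial
   sums at least double at each step, while the last row prescribes a negative
   value. *)

Section NatSums.
Variable R : realFieldType.
Implicit Types (F G : nat -> R) (x : R).

Lemma add_sum_pow2 x k : (0 < k)%N ->
  x + \sum_(1 <= m < k) 2 ^+ m.-1 * x = 2 ^+ k.-1 * x.
Proof.
case: k => // k _; elim: k => [|k IH]; first by rewrite big_geq // addr0 mul1r.
by rewrite big_nat_recr //= addrA IH exprS; ring.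
Qed.

Lemma big_nat_window F n lo hi : (lo <= hi <= n)%N ->
  (forall q, (q < lo)%N -> F q = 0) -> (forall q, (hi <= q < n)%N -> F q = 0) ->
  \sum_(0 <= q < n) F q = \sum_(lo <= q < hi) F q.
Proof.
move=> /andP[lo_hi hi_n] F_lo F_hi.
rewrite (@big_cat_nat _ _ _ lo) ?(leq_trans lo_hi) //= (@big_cat_nat _ _ _ hi lo n) //=.
have -> : \sum_(0 <= q < lo) F q = 0.
  by rewrite big_nat_cond big1 // => q /andP[/andP[_ /F_lo]].
have -> : \sum_(hi <= q < n) F q = 0 by rewrite big_nat_cond big1 // => q /andP[/F_hi].
by rewrite add0r addr0.
Qed.

Lemma ler_sum_nat_eq F G lo hi : (forall m, (lo <= m < hi)%N -> F m <= G m) ->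
  \sum_(lo <= m < hi) G m <= \sum_(lo <= m < hi) F m ->
  forall m, (lo <= m < hi)%N -> F m = G m.
Proof.
move=> leFG leGF m m_in; apply/eqP; rewrite eq_sym -subr_eq0; apply/eqP.
have GF_ge0 q : (lo <= q < hi)%N -> 0 <= G q - F q by move/leFG; rewrite subr_ge0.
have /eqP : \sum_(lo <= q < hi) (G q - F q) = 0.
  apply/eqP; rewrite eq_le {1}sumrB subr_le0 leGF /=.
  by rewrite big_nat sumr_ge0 // => q /GF_ge0.
rewrite big_nat psumr_eq0 // => /allP/(_ m); rewrite mem_index_iota m_in.
by move=> /(_ isT); rewrite implyTb => /eqP.
Qed.

Lemma norm_add_sum_aligned x F lo hi :
  let s := x + \sum_(lo <= m < hi) F m in
  `|x| + \sum_(lo <= m < hi) `|F m| <= `|s| ->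
  x * s = `|x| * `|s| /\ forall m, (lo <= m < hi)%N -> F m * s = `|F m| * `|s|.
Proof.
move=> s le_s.
have ss : s * s = `|s| * `|s| by rewrite -!expr2 real_normK ?num_real.
have xs : x * s <= `|x| * `|s| by rewrite -normrM real_ler_norm ?num_real.
have Fs m : F m * s <= `|F m| * `|s| by rewrite -normrM real_ler_norm ?num_real.
have sum_Fs : \sum_(lo <= m < hi) F m * s = s * s - x * s by rewrite -mulr_suml /s; ring.
have sum_nFs : \sum_(lo <= m < hi) `|F m| * `|s| = (\sum_(lo <= m < hi) `|F m|) * `|s|.
  by rewrite mulr_suml.
have s_ge0 := normr_ge0 s.
have key : \sum_(lo <= m < hi) `|F m| * `|s| <= \sum_(lo <= m < hi) F m * s.
  by rewrite sum_Fs sum_nFs ss; nra.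
split; last exact: ler_sum_nat_eq.
apply/eqP; rewrite eq_le xs /=.
have : \sum_(lo <= m < hi) F m * s <= \sum_(lo <= m < hi) `|F m| * `|s| by exact: ler_sum_nat.
rewrite sum_Fs sum_nFs ss; nra.
Qed.

End NatSums.

Lemma norm_eq1_of_sqr (R : numDomainType) (x : R) : x * x = 1 -> `|x| = 1.
Proof.
by move=> xx; apply/eqP; rewrite -(sqrp_eq1 (normr_ge0 x)) -normrX expr2 xx normr1.
Qed.

(* Square matrices of order [N.+1] are encoded as functions on [nat], only
   their values at indices [<= N] being relevant; [h] stands for [T L^T]. *)
Record aasen_factorization (R : realFieldType) (N : nat) (a : R)
    (b l t h : nat -> nat -> R) : Prop := AasenFactorization {
  b_bound : forall i j, (i <= N)%N -> (j <= N)%N -> `|b i j| <= a;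
  b_sym : forall i j, (i <= N)%N -> (j <= N)%N -> b i j = b j i;
  l_diag : forall i, (i <= N)%N -> l i i = 1;
  l_upper : forall i j, (i < j <= N)%N -> l i j = 0;
  l_col0 : forall i, (0 < i <= N)%N -> l i 0%N = 0;
  l_bound : forall i j, (i <= N)%N -> (j <= N)%N -> `|l i j| <= 1;
  t_sym : forall i j, (i <= N)%N -> (j <= N)%N -> t i j = t j i;
  t_tridiag : forall i j, (i.+1 < j <= N)%N -> t i j = 0;
  h_def : forall i j, (i <= N)%N -> (j <= N)%N ->
    h i j = \sum_(0 <= q < N.+1) t i q * l j q;
  b_def : forall i j, (i <= N)%N -> (j <= N)%N ->
    b i j = \sum_(0 <= m < N.+1) l i m * h m j }.

Section AasenFactorization.
Variables (R : realFieldType) (N : nat) (a : R) (b l t h : nat -> nat -> R).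
Hypothesis Hfac : aasen_factorization N a b l t h.

Lemma a_ge0 : 0 <= a.
Proof. exact: le_trans (b_bound Hfac (leq0n N) (leq0n N)). Qed.

Lemma b_lower i j : (i <= N)%N -> (j <= N)%N ->
  b i j = \sum_(0 <= m < i.+1) l i m * h m j.
Proof.
move=> iN jN; rewrite (b_def Hfac) // (@big_nat_window _ _ _ 0 i.+1) ?iN // => m /andP[im mN].
by rewrite (l_upper Hfac) ?mul0r // im -ltnS.
Qed.

Lemma h_row0 j : (j <= N)%N -> h 0%N j = b 0%N j.
Proof. by move=> jN; rewrite b_lower // big_nat1 (l_diag Hfac) // mul1r. Qed.

Lemma h_rec k j : (0 < k <= N)%N -> (j <= N)%N ->
  h k j = b k j - \sum_(1 <= m < k) l k m * h m j.
Proof.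
move=> /andP[k0 kN] jN; rewrite b_lower // big_nat_recr //= (l_diag Hfac) // mul1r.
by rewrite big_ltn // (l_col0 Hfac) ?k0 // mul0r add0r addrAC subrr add0r.
Qed.

Lemma h_hessenberg m j : (j.+1 < m <= N)%N -> h m j = 0.
Proof.
move=> /andP[jm mN]; have jN : (j <= N)%N by lia.
rewrite (h_def Hfac) // big_nat_cond big1 // => q /andP[/andP[_ qN] _].
have [jq | qj] := ltnP j q; first by rewrite (l_upper Hfac) ?mulr0 //; lia.
by rewrite (t_sym Hfac) ?(t_tridiag Hfac) ?mul0r //; lia.
Qed.

Lemma h_subdiag i : (0 < i <= N)%N -> h i i.-1 = t i i.-1.
Proof.
case: i => // i /= iN; rewrite (h_def Hfac) //; last by lia.
rewrite (@big_nat_window _ _ _ i i.+1); try lia.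
- by rewrite big_nat1 (l_diag Hfac) ?mulr1 //; lia.
- by move=> q qi; rewrite (t_sym Hfac) ?(t_tridiag Hfac) ?mul0r //; lia.
- by move=> q /andP[iq qN]; rewrite (l_upper Hfac) ?mulr0 //; lia.
Qed.

Lemma h_diag i : (0 < i <= N)%N -> h i i = t i i.-1 * l i i.-1 + t i i.
Proof.
case: i => // i /= iN; rewrite (h_def Hfac) //.
rewrite (@big_nat_window _ _ _ i i.+2); try lia.
- by rewrite big_ltn // big_nat1 (l_diag Hfac) ?mulr1 //; lia.
- by move=> q qi; rewrite (t_sym Hfac) ?(t_tridiag Hfac) ?mul0r //; lia.
- by move=> q /andP[iq qN]; rewrite (l_upper Hfac) ?mulr0 //; lia.
Qed.

Lemma t00 : t 0%N 0%N = b 0%N 0%N.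
Proof.
rewrite -h_row0 // (h_def Hfac) // (@big_nat_window _ _ _ 0 1) //; try lia.
- by rewrite big_nat1 (l_diag Hfac) ?mulr1.
- by move=> q /andP[iq qN]; rewrite (l_upper Hfac) ?mulr0 //; lia.
Qed.

Lemma norm_h_le k j : (0 < k <= N)%N -> (j <= N)%N -> `|h k j| <= 2 ^+ k.-1 * a.
Proof.
move=> + jN; elim/ltn_ind: k => k IH /andP[k0 kN].
rewrite h_rec ?k0 // -add_sum_pow2 //.
apply: le_trans (ler_normB _ _) (lerD (b_bound Hfac kN jN) _).
apply: le_trans (ler_norm_sum _ _ _) (ler_sum_nat _) => m /andP[m0 mk].
rewrite normrM; apply: le_trans (IH m mk _); last by rewrite m0; lia.
by rewrite ler_piMl // (l_bound Hfac) //; lia.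
Qed.

Lemma norm_h_extremal k j : (0 < k <= N)%N -> (j <= N)%N ->
  2 ^+ k.-1 * a <= `|h k j| ->
  b k j * h k j = a * `|h k j| /\
  forall m, (0 < m < k)%N ->
    `|h m j| = 2 ^+ m.-1 * a /\ - l k m * h m j * h k j = 2 ^+ m.-1 * a * `|h k j|.
Proof.
move=> kP jN h_ge; have /andP[k0 kN] := kP.
pose e m := - (l k m * h m j).
have h_sum : h k j = b k j + \sum_(1 <= m < k) e m by rewrite h_rec // sumrN.
have e_le_h m : (0 < m < k)%N -> `|e m| <= `|h m j|.
  by move=> mk; rewrite normrN normrM ler_piMl // (l_bound Hfac); lia.
have h_le_pow m : (0 < m < k)%N -> `|h m j| <= 2 ^+ m.-1 * a.
  by move=> mk; apply: norm_h_le => //; lia.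
have e_le m (mk : (0 < m < k)%N) := le_trans (e_le_h m mk) (h_le_pow m mk).
have h_le : `|h k j| <= `|b k j| + \sum_(1 <= m < k) `|e m|.
  by rewrite h_sum; apply: le_trans (ler_normD _ _) _; rewrite lerD2l ler_norm_sum.
have := ler_sum_nat e_le; have := b_bound Hfac kN jN; have := add_sum_pow2 a k0.
move=> geom b_le sum_e_le.
have /(ler_sum_nat_eq e_le) e_eq : \sum_(1 <= m < k) 2 ^+ m.-1 * a <= \sum_(1 <= m < k) `|e m|.
  by lra.
have [bh eh] : b k j * h k j = `|b k j| * `|h k j| /\
    forall m, (0 < m < k)%N -> e m * h k j = `|e m| * `|h k j|.
  by rewrite h_sum; apply: norm_add_sum_aligned; rewrite -h_sum; lra.
have b_eq : `|b k j| = a by lra.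
split=> [|m mk]; first by rewrite bh b_eq.
have := e_eq m mk; have := e_le_h m mk; have := h_le_pow m mk; rewrite mulNr => ? ? e_m.
by split; [lra | rewrite -e_m -eh].
Qed.

Section SignedLastColumn.
Variable sg : nat -> R.
Hypothesis sg_sq : forall k, (0 < k <= N)%N -> sg k * sg k = 1.
Hypothesis l_signed : forall k m, (0 < m < k)%N -> (k <= N)%N -> l k m = - (sg k * sg m).
Hypothesis b_last : forall k, (0 < k <= N)%N -> b k N = sg k * a.

Let signK k x : (0 < k <= N)%N -> sg k * (sg k * x) = x.
Proof. by move=> kP; rewrite mulrA sg_sq // mul1r. Qed.

Definition colsum j k := \sum_(1 <= m < k.+1) sg m * h m j.

Lemma b_signed k j : (0 < k <= N)%N -> (j <= N)%N ->
  b k j = h k j - sg k * colsum j k.-1.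
Proof.
move=> kP jN; have /andP[k0 kN] := kP.
have sum_signed : \sum_(1 <= m < k) l k m * h m j = - (sg k * colsum j k.-1).
  rewrite /colsum prednK // mulr_sumr -sumrN.
  by apply: eq_big_nat => m mP; rewrite l_signed //; ring.
by rewrite h_rec // sum_signed opprK addrK.
Qed.

Lemma b_signed_hessenberg i j : (0 < i <= N)%N -> (j.+2 <= i)%N ->
  b i j = - sg i * colsum j j.+1.
Proof.
move=> iP ji; rewrite b_signed //; last by lia.
rewrite h_hessenberg ?sub0r ?mulNr; last by lia.
congr (- (_ * _)); rewrite /colsum (@big_cat_nat _ _ _ j.+2 1 i.-1.+1) //=; try lia.
rewrite -[RHS]addr0; congr (_ + _).
rewrite big_nat_cond big1 // => m /andP[/andP[jm mi] _].
by rewrite h_hessenberg ?mulr0 //; lia.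
Qed.

Lemma colsumS j k : (k < N)%N -> (j <= N)%N ->
  colsum j k.+1 = 2 * colsum j k + sg k.+1 * b k.+1 j.
Proof.
move=> kN jN; rewrite b_signed //= mulrBr signK // /colsum big_nat_recr //=; ring.
Qed.

Lemma colsum_pivot j : (0 < j)%N -> (j.+2 <= N)%N -> colsum j j.+1 = - sg N * (sg j * a).
Proof.
move=> j0 jN; have NP : (0 < N <= N)%N by lia.
have jN' : (j <= N)%N by lia.
rewrite -b_last ?j0 ?jN' // (b_sym Hfac) ?jN' //.
by rewrite (b_signed_hessenberg NP jN) !mulNr mulrN opprK signK.
Qed.

(* With [c = N - 2] and [tau = sg c * sg N], the partial sums [tau * colsum c k]
   start at [a] for [k = 1] and at least double minus [a] at each step, so they
   stay [>= a]; yet the last row forces the value [- a] at [k = c + 1]. *)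
Lemma signed_last_column_absurd : (5 <= N)%N -> 0 < a -> False.
Proof.
move=> N5 a_gt0; pose c := N.-2; pose tau := sg c * sg N.
have tauK x : tau * (tau * x) = x.
  have -> : tau * (tau * x) = sg c * (sg c * (sg N * (sg N * x))) by rewrite /tau; ring.
  by rewrite !signK //; lia.
pose u k := tau * colsum c k.
have u_last : u c.+1 = - a.
  rewrite /u colsum_pivot; try lia.
  by rewrite -[X in _ = - X](tauK a) /tau; ring.
have u_first : u 1%N = a.
  have h1c : h 1%N c = b 1%N c.
    by rewrite b_signed /colsum ?big_geq ?mulr0 ?subr0 //; lia.
  rewrite (b_sym Hfac) ?(b_signed_hessenberg (i := c)) ?colsum_pivot in h1c; try lia.
  rewrite /u /colsum big_nat1 h1c -[RHS](tauK a) -[a in RHS](@signK 1%N a); last by lia.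
  by rewrite /tau; ring.
have u_step k : (0 < k <= c)%N -> 2 * u k - a <= u k.+1.
  move=> kP; rewrite /u colsumS; try lia.
  rewrite mulrDr mulrCA lerD2l -lerN2 opprK.
  have tau_sq : tau * tau = 1 by rewrite -[RHS](tauK 1) mulr1.
  apply: le_trans (ler_norm _) _.
  rewrite normrN normrM (norm_eq1_of_sqr tau_sq) mul1r normrM.
  rewrite norm_eq1_of_sqr ?mul1r; last by apply: sg_sq; lia.
  by apply: (b_bound Hfac); lia.
have u_ge k : (0 < k <= c.+1)%N -> a <= u k.
  elim: k => [//|k IH /andP[_ kc]]; case: k IH kc => [_ _|k IH kc]; first by rewrite u_first.
  by have := u_step k.+1 ltac:(lia); have := IH ltac:(lia); lra.
by have := u_ge c.+1 ltac:(lia); rewrite u_last; lra.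
Qed.

End SignedLastColumn.

Section ExtremalLastColumn.
Hypotheses (N_gt0 : (0 < N)%N) (a_gt0 : 0 < a).
Hypothesis hNN_extremal : 2 ^+ N.-1 * a <= `|h N N|.

Let sg k := Num.sg (h k N).
Let NP : (0 < N <= N)%N. Proof. by rewrite N_gt0 leqnn. Qed.

Lemma norm_h_last_col k : (0 < k <= N)%N -> `|h k N| = 2 ^+ k.-1 * a.
Proof.
move=> kP; have [k_lt | ->] : (k < N)%N \/ k = N by lia.
  by have [_ /(_ k)] := norm_h_extremal NP (leqnn N) hNN_extremal; case=> //; lia.
by apply/eqP; rewrite eq_le hNN_extremal norm_h_le.
Qed.

Let norm_h_neq0 k : (0 < k <= N)%N -> `|h k N| != 0.
Proof. by move/norm_h_last_col=> ->; rewrite mulf_neq0 ?expf_neq0 // gt_eqF. Qed.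

Let sg_sq k : (0 < k <= N)%N -> sg k * sg k = 1.
Proof. by move=> kP; rewrite -expr2 sqr_sg -normr_eq0 (negbTE (norm_h_neq0 kP)). Qed.

Let h_extremal k : (0 < k <= N)%N -> 2 ^+ k.-1 * a <= `|h k N|.
Proof. by move/norm_h_last_col=> ->. Qed.

Let l_signed k m : (0 < m < k)%N -> (k <= N)%N -> l k m = - (sg k * sg m).
Proof.
move=> mP kN; have kP : (0 < k <= N)%N by rewrite kN andbT; lia.
have mP' : (0 < m <= N)%N by lia.
have [_ /(_ m mP) [hm e]] := norm_h_extremal kP (leqnn N) (h_extremal kP).
have unit : - l k m * sg m * sg k = 1.
  apply: (mulIf (mulf_neq0 (norm_h_neq0 mP') (norm_h_neq0 kP))).
  rewrite mul1r hm -[in RHS]e [in RHS](numEsg (h m N)) hm [in RHS](numEsg (h k N)).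
  by rewrite /sg; ring.
transitivity (- (sg k * sg m) * (- l k m * sg m * sg k)); last by rewrite unit mulr1.
by rewrite -[LHS]mulr1 -(sg_sq kP) -[LHS]mulr1 -(sg_sq mP'); ring.
Qed.

Let b_last k : (0 < k <= N)%N -> b k N = sg k * a.
Proof.
move=> kP; have [e _] := norm_h_extremal kP (leqnn N) (h_extremal kP).
have ba : b k N * sg k = a.
  by apply: (mulIf (norm_h_neq0 kP)); rewrite -e [in RHS](numEsg (h k N)) /sg; ring.
by rewrite -ba -[LHS]mulr1 -(sg_sq kP); ring.
Qed.

Lemma hNN_extremal_absurd : (5 <= N)%N -> False.
Proof. by move=> N5; apply: (signed_last_column_absurd sg_sq l_signed b_last). Qed.

End ExtremalLastColumn.

Lemma norm_hNN_lt : (5 <= N)%N -> 0 < a -> `|h N N| < 2 ^+ N.-1 * a.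
Proof.
move=> N5 a_gt0; rewrite ltNge; apply/negP=> hNN_ge.
by apply: (hNN_extremal_absurd _ a_gt0 hNN_ge); lia.
Qed.

Lemma t_diag i : (0 < i <= N)%N -> t i i = h i i - h i i.-1 * l i i.-1.
Proof. by move=> iP; rewrite h_diag // h_subdiag //; ring. Qed.

Lemma norm_t_diag_le i : (0 < i <= N)%N -> `|t i i| <= `|h i i| + `|h i i.-1|.
Proof.
move=> iP; rewrite t_diag //; apply: le_trans (ler_normB _ _) _.
by rewrite lerD2l normrM ler_piMr // (l_bound Hfac); lia.
Qed.

Lemma norm_t_le i j : (i <= N)%N -> (j <= N)%N -> `|t i j| <= 2 ^+ minn i j * a.
Proof.
wlog le_ij : i j / (i <= j)%N.
  move=> ordered iN jN; have /orP[ij | ji] := leq_total i j; first exact: ordered.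
  by rewrite (t_sym Hfac) // minnC; apply: ordered.
move=> iN jN; have a0 := a_ge0; rewrite (minn_idPl le_ij).
case: (ltngtP j i.+1) => [ji | ij | j_eq].
- have -> : j = i by lia.
  case: i iN {le_ij ji} => [_ | i iN]; first by rewrite t00 expr0 mul1r (b_bound Hfac).
  have iP : (0 < i.+1 <= N)%N by rewrite iN.
  apply: le_trans (norm_t_diag_le iP) _.
  have := norm_h_le iP iN; have := norm_h_le iP (ltnW iN).
  by rewrite exprS /=; lra.
- by rewrite (t_tridiag Hfac) ?ij // normr0 mulr_ge0 // exprn_ge0.
- have iP : (0 < i.+1 <= N)%N by rewrite /= -j_eq.
  by rewrite j_eq (t_sym Hfac) // -[i in t _ i]/(i.+1.-1) -h_subdiag // norm_h_le.
Qed.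

Lemma norm_t_le_pow i j : (i <= N)%N -> (j <= N)%N -> `|t i j| <= 2 ^+ N * a.
Proof.
move=> iN jN; apply: le_trans (norm_t_le iN jN) (ler_wpM2r a_ge0 _).
by rewrite ler_eXn2l ?ltr1n //; lia.
Qed.

Lemma norm_t_lt_pow i j : (5 <= N)%N -> 0 < a -> (i <= N)%N -> (j <= N)%N ->
  `|t i j| < 2 ^+ N * a.
Proof.
move=> N5 a_gt0 iN jN.
have [[-> ->] | ij_lt] : (i = N /\ j = N) \/ (minn i j < N)%N by lia.
  have NP : (0 < N <= N)%N by rewrite leqnn andbT; lia.
  apply: le_lt_trans (norm_t_diag_le NP) _.
  have := norm_hNN_lt N5 a_gt0; have := norm_h_le NP (leq_pred N).
  by rewrite -[in 2 ^+ N](prednK (proj1 (andP NP))) exprS; lra.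
apply: le_lt_trans (norm_t_le iN jN) _.
by rewrite ltr_pM2r // ltr_eXn2l ?ltr1n.
Qed.

End AasenFactorization.

Section MaxAbs.
Variables (R : realFieldType) (n : nat).
Implicit Types (M : 'M[R]_n) (c : R).

Lemma maxabs_ge M i j : `|M i j| <= maxabs M.
Proof. exact: bigmax_sup (le_bigmax _ _ j). Qed.

Lemma maxabs_le M c : 0 <= c -> (forall i j, `|M i j| <= c) -> maxabs M <= c.
Proof. by move=> c0 Mc; apply/bigmax_leP; split=> // i _; apply/bigmax_leP; split. Qed.

Lemma maxabs_lt M c : 0 < c -> (forall i j, `|M i j| < c) -> maxabs M < c.
Proof. by move=> c0 Mc; apply/bigmax_ltP; split=> // i _; apply/bigmax_ltP; split. Qed.

Lemma maxabs_gt0 M : M != 0 -> 0 < maxabs M.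
Proof.
apply: contraNT; rewrite -leNgt => M_le0; apply/eqP/matrixP=> i j; rewrite mxE.
by apply/eqP; rewrite -normr_le0 (le_trans (maxabs_ge M i j)).
Qed.

End MaxAbs.

Definition natmx (R : Type) (N : nat) (M : 'M[R]_N.+1) (i j : nat) : R :=
  M (inord i) (inord j).

Lemma natmxE (R : Type) (N : nat) (M : 'M[R]_N.+1) (i j : 'I_N.+1) : natmx M i j = M i j.
Proof. by rewrite /natmx !inord_val. Qed.

Lemma aasen_factorization_natmx (R : realFieldType) (N : nat) (A L T : 'M[R]_N.+1)
    (s : 'S_N.+1) (B := perm_mx s *m A *m (perm_mx s)^T) :
  A^T = A -> B = L *m T *m L^T ->
  unit_lower L -> first_col_e1 L -> (forall i j, `|L i j| <= 1) -> sym_tridiag T ->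
  aasen_factorization N (maxabs A) (natmx B) (natmx L) (natmx T) (natmx (T *m L^T)).
Proof.
move=> A_sym B_LTL [L_diag L_upper] L_col0 L_bound [T_sym T_tridiag].
have B_perm i j : B i j = A (s i) (s j).
  by rewrite /B tr_perm_mx -col_permE -row_permE !mxE.
have sum_inord (F : 'I_N.+1 -> R) : \sum_(m < N.+1) F m = \sum_(0 <= m < N.+1) F (inord m).
  by rewrite big_mkord; apply: eq_bigr => m _; rewrite inord_val.
split=> [i j _ _ | i j _ _ | i iN | i j /andP[ij jN] | i /andP[i0 iN] | i j _ _ |
         i j _ _ | i j /andP[ij jN] | i j iN jN | i j iN jN]; rewrite /natmx.
- by rewrite B_perm maxabs_ge.
- by rewrite !B_perm -[in LHS]A_sym mxE.
- exact: L_diag.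
- have iN : (i < N.+1)%N by lia.
  by rewrite L_upper // (inordK iN) inordK.
- have i_val : val (@inord N i) = i by apply: inordK.
  by rewrite (L_col0 _ (inord 0)) ?i_val ?gtn_eqF //; apply: inordK.
- exact: L_bound.
- by rewrite -[in LHS]T_sym mxE.
- have iN : (i < N.+1)%N by lia.
  by rewrite T_tridiag // (inordK iN) inordK.
- by rewrite mxE sum_inord; apply: eq_bigr => q _; rewrite mxE.
- by rewrite B_LTL -mulmxA mxE sum_inord.
Qed.

Theorem theorem1 (R : realFieldType) (n : nat) (A L T : 'M[R]_n) (s : 'S_n) :
  (3 <= n)%N ->
  A^T = A ->
  A != 0 ->
  perm_mx s *m A *m (perm_mx s)^T = L *m T *m L^T ->
  unit_lower L ->
  first_col_e1 L ->
  (forall i j : 'I_n, `|L i j| <= 1) ->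
  sym_tridiag T ->
  growth A T <= 2 ^+ n.-1 /\
  ((6 <= n)%N ->
     (forall i : 'I_n, val i = n.-1 -> `|T i i| < 2 ^+ n.-1 * maxabs A) /\
     growth A T < 2 ^+ n.-1).
Proof.
case: n A L T s => [//|N] A L T s _ A_sym A_neq0 B_LTL L_unit L_col0 L_bound T_tridiag /=.
have Hfac := aasen_factorization_natmx A_sym B_LTL L_unit L_col0 L_bound T_tridiag.
have a_gt0 := maxabs_gt0 A_neq0.
rewrite /growth ler_pdivrMr // ltr_pdivrMr //; split.
  apply: maxabs_le => [|i j]; first by rewrite mulr_ge0 ?exprn_ge0 ?ltW.
  by rewrite -(natmxE T); apply: (norm_t_le_pow Hfac); rewrite -ltnS ltn_ord.
move=> N5; split=> [i /= iN | ].
  by rewrite -(natmxE T) iN; apply: (norm_t_lt_pow Hfac).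
apply: maxabs_lt => [|i j]; first by rewrite mulr_gt0 ?exprn_gt0.
by rewrite -(natmxE T); apply: (norm_t_lt_pow Hfac) => //; rewrite -ltnS ltn_ord.
Qed.
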